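(* For every $f\in H^2(\mathbb{D})$, $$\lim_{|a|\to 1\ \text{or}\ n\to\infty}|\langle f,e_{n,a}\rangle|=0,$$ i.e. for every $\varepsilon>0$ there exist $r<1$ and $N\in\mathbb{N}$ such that $|\langle f,e_{n,a}\rangle|<\varepsilon$ whenever $(n,a)\in\mathbb{N}\times\mathbb{D}$ satisfies $|a|>r$ or $n>N$. (In other words, the complete Szegő dictionary $\{e_{n,a}\}_{(n,a)\in\mathbb{N}\times\mathbb{D}}$ satisfies the boundary vanishing condition.)
   Context: $\mathbb{D}$ is the open unit disc; $H^2(\mathbb{D})$ the Hardy space with inner product $\langle f,g\rangle=\frac{1}{2\pi}\int_0^{2\pi}f(e^{it})\overline{g(e^{it})}\,dt$. For $n\in\mathbb{N}=\{0,1,\dots\}$ and $a\in\mathbb{D}$, $k_{n,a}(z)=\left(\frac{\partial}{\partial\overline{a}}\right)^n\frac{1}{1-\overline{a}z}=\frac{n!\,z^n}{(1-\overline{a}z)^{n+1}}$ and $e_{n,a}=k_{n,a}/\|k_{n,a}\|$. *)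

From Stdlib Require Import Reals Factorial.
From Coquelicot Require Import Coquelicot.
Open Scope R_scope.

Fixpoint cpow (z : C) (n : nat) : C :=
  match n with O => RtoC 1 | S m => Cmult z (cpow z m) end.

(* An element of H^2(D) is represented by its Taylor coefficient sequence
   c (f(z) = sum_k c k z^k on the disc); f belongs to H^2 iff
   sum_k |c k|^2 < oo. *)
Definition H2 (c : nat -> C) : Prop :=
  ex_series (fun k => (Cmod (c k))^2).

Definition H2fun (c : nat -> C) (z : C) : C :=
  (Series (fun k => Re (Cmult (c k) (cpow z k))),
   Series (fun k => Im (Cmult (c k) (cpow z k)))).

(* The H^2 inner product <f,g> = (1/2pi) int f(e^it) conj(g(e^it)) dt,
   which by Parseval equals sum_k c_k conj(d_k) (absolutely convergent
   for c, d in H^2). *)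
Definition H2inner (c d : nat -> C) : C :=
  (Series (fun k => Re (Cmult (c k) (Cconj (d k)))),
   Series (fun k => Im (Cmult (c k) (Cconj (d k))))).

Definition H2norm (c : nat -> C) : R := sqrt (Re (H2inner c c)).

(* Taylor coefficients of k_{n,a}(z) = n! z^n / (1 - conj(a) z)^(n+1)
   = sum_{k >= n} (k!/(k-n)!) conj(a)^(k-n) z^k. *)
Definition kna (n : nat) (a : C) (k : nat) : C :=
  if Nat.leb n k then
    Cmult (RtoC (INR (fact k) / INR (fact (k - n)))) (cpow (Cconj a) (k - n))
  else RtoC 0.

Definition ena (n : nat) (a : C) (k : nat) : C :=
  Cmult (RtoC (/ H2norm (kna n a))) (kna n a k).

From Stdlib Require Import Reals Factorial Lia Lra.
From Coquelicot Require Import Coquelicot.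
Open Scope R_scope.

(** The coefficients of [e_{n,a}] form a unit vector of l^2, so by Cauchy–Schwarz
    (used in the weighted form [xy <= (c x^2 + y^2/c)/2]) the part of [<f, e_{n,a}>]
    coming from the coefficients of index [k > K] is bounded by the l^2-tail of [f],
    uniformly in [(n,a)]. The coefficients of index [k <= K] vanish when [n > K], and
    otherwise have square at most [k!^2 (1 - |a|^2)], because those of [k_{n,a}] are
    bounded by [k!] while [||k_{n,a}||^2 >= 1/(1 - |a|^2)]; so they are small when
    [|a|] is close to [1]. *)

Lemma sum_n_succ (u : nat -> R) n : sum_n u (S n) = sum_n u n + u (S n).
Proof. exact (sum_Sn (G := R_AbelianMonoid) u n). Qed.

Lemma sum_n_nonneg (u : nat -> R) K : (forall k, 0 <= u k) -> 0 <= sum_n u K.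
Proof.
  intro Hu; induction K as [|K IH]; [rewrite sum_O; apply Hu|].
  rewrite sum_n_succ; pose proof (Hu (S K)); lra.
Qed.

Lemma Series_le_gen (u v : nat -> R) :
  (forall k, u k <= v k) -> ex_series u -> ex_series v -> Series u <= Series v.
Proof.
  intros Huv Hu Hv.
  refine (is_lim_seq_le (sum_n u) (sum_n v) (Series u) (Series v) _
    (Series_correct u Hu) (Series_correct v Hv)).
  intro N; apply sum_n_m_le, Huv.
Qed.

Lemma Series_nonneg (u : nat -> R) : (forall k, 0 <= u k) -> ex_series u -> 0 <= Series u.
Proof.
  intros Hu Hex.
  rewrite <- (Rmult_0_l (Series u)), <- Series_scal_l.
  apply Series_le_gen; [intro k; rewrite Rmult_0_l; apply Hu| |exact Hex].
  apply (ex_series_scal_l (V := R_NormedModule) 0), Hex.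
Qed.

Lemma Series_split (u : nat -> R) K :
  ex_series u -> Series u = sum_n u K + Series (fun k => u (S K + k)%nat).
Proof. intro Hu; rewrite (Series_incr_n u (S K)), sum_n_Reals; auto; lia. Qed.

Lemma sum_n_le_Series (u : nat -> R) K :
  (forall k, 0 <= u k) -> ex_series u -> sum_n u K <= Series u.
Proof.
  intros Hu Hex; rewrite (Series_split u K Hex).
  enough (0 <= Series (fun k => u (S K + k)%nat)) by lra.
  apply Series_nonneg; [auto|apply ex_series_incr_n, Hex].
Qed.

Lemma Series_tail_lt (u : nat -> R) :
  ex_series u -> forall eta, 0 < eta -> exists K, Series (fun k => u (S K + k)%nat) < eta.
Proof.
  intros Hu eta Heta.
  destruct (proj2 (is_lim_seq_spec (sum_n u) (Series u)) (Series_correct u Hu)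
                (mkposreal eta Heta)) as [K HK].
  exists K; specialize (HK K (Nat.le_refl K)); simpl in HK.
  rewrite (Series_split u K Hu) in HK.
  apply Rabs_lt_between in HK; lra.
Qed.

Lemma Rabs_Series_le (u v : nat -> R) :
  (forall k, Rabs (u k) <= v k) -> ex_series v -> Rabs (Series u) <= Series v.
Proof.
  intros Huv Hv.
  assert (Habs : ex_series (fun k => Rabs (u k))).
  { apply (ex_series_le (V := R_CompleteNormedModule)) with v; [|exact Hv].
    intro k; rewrite Rabs_Rabsolu; apply Huv. }
  eapply Rle_trans; [apply Series_Rabs, Habs|].
  apply Series_le; [|exact Hv]. intro k; split; [apply Rabs_pos|apply Huv].
Qed.

Lemma mul_le_amgm c x y : 0 < c -> x * y <= (c * x ^ 2 + y ^ 2 / c) / 2.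
Proof.
  intro Hc.
  assert (E : (c * x ^ 2 + y ^ 2 / c) / 2 - x * y = (c * x - y) ^ 2 / (2 * c)) by (field; lra).
  assert (0 <= (c * x - y) ^ 2 / (2 * c)) by (apply Rdiv_le_0_compat; [apply pow2_ge_0|lra]).
  lra.
Qed.

Lemma sum_n_mul_le_amgm (F G : nat -> R) c K : 0 < c ->
  sum_n (fun k => F k * G k) K <=
  (c * sum_n (fun k => F k ^ 2) K + sum_n (fun k => G k ^ 2) K / c) / 2.
Proof.
  intro Hc; induction K as [|K IH].
  - rewrite !sum_O; apply mul_le_amgm, Hc.
  - rewrite !sum_n_succ. pose proof (mul_le_amgm c (F (S K)) (G (S K)) Hc).
    unfold Rdiv in *. lra.
Qed.

Lemma ex_series_mul_of_sq (F G : nat -> R) :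
  ex_series (fun k => F k ^ 2) -> ex_series (fun k => G k ^ 2) ->
  ex_series (fun k => F k * G k).
Proof.
  intros HF HG.
  apply (ex_series_le (V := R_CompleteNormedModule)) with (fun k => (F k ^ 2 + G k ^ 2) / 2).
  - intro k. change (norm (F k * G k)) with (Rabs (F k * G k)).
    rewrite Rabs_mult, <- (pow2_abs (F k)), <- (pow2_abs (G k)).
    pose proof (mul_le_amgm 1 (Rabs (F k)) (Rabs (G k)) Rlt_0_1). lra.
  - apply ex_series_scal_r, (ex_series_plus (V := R_NormedModule)); assumption.
Qed.

Lemma Series_mul_le_amgm (F G : nat -> R) c : 0 < c ->
  ex_series (fun k => F k ^ 2) -> ex_series (fun k => G k ^ 2) ->
  Series (fun k => F k * G k) <=
  (c * Series (fun k => F k ^ 2) + Series (fun k => G k ^ 2) / c) / 2.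
Proof.
  intros Hc HF HG.
  assert (HcF : ex_series (fun k => c * F k ^ 2))
    by apply (ex_series_scal_l (V := R_NormedModule) c), HF.
  assert (HGc : ex_series (fun k => G k ^ 2 * / c)) by apply ex_series_scal_r, HG.
  assert (Hsum : ex_series (fun k => c * F k ^ 2 + G k ^ 2 * / c))
    by (apply (ex_series_plus (V := R_NormedModule)); assumption).
  apply Rle_trans with (Series (fun k => (c * F k ^ 2 + G k ^ 2 * / c) * / 2)).
  - apply Series_le_gen; [intro k; apply mul_le_amgm, Hc| |apply ex_series_scal_r, Hsum].
    apply ex_series_mul_of_sq; assumption.
  - rewrite Series_scal_r, Series_plus, Series_scal_l, Series_scal_r by assumption.
    right; reflexivity.
Qed.

Lemma Series_mul_le_split (F G : nat -> R) K c d : 0 < c -> 0 < d ->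
  ex_series (fun k => F k ^ 2) -> ex_series (fun k => G k ^ 2) ->
  Series (fun k => F k * G k) <=
  (c * Series (fun k => F k ^ 2) + sum_n (fun k => G k ^ 2) K / c) / 2 +
  (d * Series (fun k => F (S K + k)%nat ^ 2) + Series (fun k => G k ^ 2) / d) / 2.
Proof.
  intros Hc Hd HF HG.
  assert (Hsq : forall (u : nat -> R) k, 0 <= u k ^ 2) by (intros; apply pow2_ge_0).
  rewrite (Series_split _ K) by (apply ex_series_mul_of_sq; assumption).
  apply Rplus_le_compat.
  - eapply Rle_trans; [apply sum_n_mul_le_amgm, Hc|].
    pose proof (sum_n_le_Series (fun k => F k ^ 2) K (Hsq F) HF). nra.
  - eapply Rle_trans.
    { apply (Series_mul_le_amgm (fun k => F (S K + k)%nat) (fun k => G (S K + k)%nat) d Hd);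
        apply (ex_series_incr_n (fun k => _ k ^ 2)); assumption. }
    rewrite (Series_split (fun k => G k ^ 2) K HG), Rdiv_plus_distr.
    assert (0 <= sum_n (fun k => G k ^ 2) K / d)
      by (apply Rdiv_le_0_compat; [apply sum_n_nonneg, Hsq|exact Hd]).
    lra.
Qed.

Lemma Series_mul_lt (F G : nat -> R) K delta : 0 < delta ->
  ex_series (fun k => F k ^ 2) -> ex_series (fun k => G k ^ 2) ->
  Series (fun k => G k ^ 2) <= 1 ->
  Series (fun k => F (S K + k)%nat ^ 2) < delta ^ 2 ->
  sum_n (fun k => G k ^ 2) K <= delta ^ 2 / (Series (fun k => F k ^ 2) + 1) ->
  Series (fun k => F k * G k) < 2 * delta.
Proof.
  intros Hdelta HF HG HG1 Htail Hhead.
  set (SF := Series (fun k => F k ^ 2)) in *.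
  assert (HSF : 0 <= SF) by (apply Series_nonneg; [intro; apply pow2_ge_0|exact HF]).
  set (c := delta / (SF + 1)).
  assert (Hc : 0 < c) by (apply Rdiv_lt_0_compat; lra).
  assert (Hd : 0 < / delta) by (apply Rinv_0_lt_compat, Hdelta).
  eapply Rle_lt_trans; [apply (Series_mul_le_split F G K c (/ delta)); assumption|].
  assert (H1 : c * SF < delta).
  { assert (E : delta - c * SF = c) by (unfold c; field; lra). lra. }
  assert (H2 : sum_n (fun k => G k ^ 2) K / c <= delta).
  { apply Rle_trans with (delta ^ 2 / (SF + 1) / c).
    - apply Rmult_le_compat_r; [left; apply Rinv_0_lt_compat|]; assumption.
    - right; unfold c; field; lra. }
  assert (H3 : / delta * Series (fun k => F (S K + k)%nat ^ 2) < delta).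
  { apply Rlt_le_trans with (/ delta * delta ^ 2); [apply Rmult_lt_compat_l; assumption|].
    right; field; lra. }
  assert (H4 : Series (fun k => G k ^ 2) / / delta <= delta).
  { unfold Rdiv; rewrite Rinv_inv.
    apply Rle_trans with (1 * delta); [apply Rmult_le_compat_r|]; lra. }
  fold SF; lra.
Qed.

Lemma Cmod_H2inner_le (c d : nat -> C) : H2 c -> H2 d ->
  Cmod (H2inner c d) <= 2 * Series (fun k => Cmod (c k) * Cmod (d k)).
Proof.
  intros Hc Hd.
  pose proof (ex_series_mul_of_sq _ _ Hc Hd) as Hcd.
  assert (Hterm : forall k, Cmod (Cmult (c k) (Cconj (d k))) = Cmod (c k) * Cmod (d k))
    by (intro k; rewrite Cmod_mult, Cmod_conj; reflexivity).
  assert (Hsqrt2 : sqrt 2 <= 2).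
  { apply Rle_trans with (sqrt (2 * 2)); [apply sqrt_le_1_alt; lra|rewrite sqrt_square; lra]. }
  eapply Rle_trans; [apply Cmod_2Rmax|]; unfold H2inner; cbn [fst snd].
  apply Rmult_le_compat; [left; apply Rlt_sqrt2_0|apply Rmax_case; apply Rabs_pos|exact Hsqrt2|].
  apply Rmax_lub; apply Rabs_Series_le; try exact Hcd; intro k; rewrite <- Hterm.
  - apply re_le_Cmod.
  - eapply Rle_trans; [apply Rmax_r|apply Rmax_Cmod].
Qed.

Definition fact_ratio (n j : nat) : R := INR (fact (n + j)) / INR (fact j).

Lemma fact_ratio_ge_1 n j : 1 <= fact_ratio n j.
Proof.
  pose proof (INR_fact_lt_0 j).
  unfold fact_ratio; apply (Rmult_le_reg_r (INR (fact j))); [lra|].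
  rewrite Rmult_1_l; unfold Rdiv; rewrite Rmult_assoc, Rinv_l, Rmult_1_r by lra.
  apply le_INR, fact_le; lia.
Qed.

Lemma fact_ratio_le_fact n j : fact_ratio n j <= INR (fact (n + j)).
Proof.
  pose proof (INR_fact_lt_0 (n + j)).
  assert (1 <= INR (fact j)) by (apply (le_INR 1), lt_O_fact).
  unfold fact_ratio; apply (Rmult_le_reg_r (INR (fact j))); [lra|].
  unfold Rdiv; rewrite Rmult_assoc, Rinv_l by lra. nra.
Qed.

Lemma fact_ratio_succ n j :
  fact_ratio n (S j) = fact_ratio n j * (INR (S (n + j)) / INR (S j)).
Proof.
  unfold fact_ratio; rewrite Nat.add_succ_r, !fact_simpl, !mult_INR.
  pose proof (INR_fact_lt_0 j). pose proof (lt_0_INR (S j) (Nat.lt_0_succ j)).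
  field; lra.
Qed.

Lemma is_lim_seq_succ_ratio n : is_lim_seq (fun j => INR (S (n + j)) / INR (S j)) 1.
Proof.
  apply is_lim_seq_ext with (fun j => 1 + INR n * / INR (S j)).
  { intro j. pose proof (lt_0_INR (S j) (Nat.lt_0_succ j)).
    rewrite <- Nat.add_succ_r, plus_INR. field; lra. }
  assert (Hinv : is_lim_seq (fun j => / INR (S j)) 0).
  { apply (is_lim_seq_incr_1 (fun j => / INR j) 0).
    replace (Finite 0) with (Rbar_inv p_infty) by reflexivity.
    apply is_lim_seq_inv; [apply is_lim_seq_INR|discriminate]. }
  pose proof (is_lim_seq_plus' _ _ _ _ (is_lim_seq_const 1) (is_lim_seq_scal_l _ (INR n) 0 Hinv))
    as Hlim.
  rewrite Rmult_0_r, Rplus_0_r in Hlim; exact Hlim.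
Qed.

Lemma ex_series_fact_ratio_sq_geom n s : 0 < s < 1 ->
  ex_series (fun j => fact_ratio n j ^ 2 * s ^ j).
Proof.
  intro Hs.
  assert (Hpos : forall j, 0 < fact_ratio n j ^ 2 * s ^ j).
  { intro j; pose proof (fact_ratio_ge_1 n j).
    apply Rmult_lt_0_compat; [nra|apply pow_lt; lra]. }
  apply ex_series_ext with (fun j => Rabs (fact_ratio n j ^ 2 * s ^ j)).
  { intro j; apply Rabs_pos_eq; left; apply Hpos. }
  apply ex_series_DAlembert with s; [lra|intro j; apply Rgt_not_eq, Hpos|].
  set (q := fun j => INR (S (n + j)) / INR (S j)).
  apply is_lim_seq_ext with (fun j => q j * q j * s).
  - intro j. pose proof (fact_ratio_ge_1 n j).
    assert (0 <= q j) by (apply Rdiv_le_0_compat; apply pos_INR || apply lt_0_INR; lia).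
    rewrite fact_ratio_succ; fold (q j).
    rewrite Rabs_pos_eq; [simpl; field; repeat split; try lra; apply pow_nonzero; lra|].
    apply Rdiv_le_0_compat; [|apply Hpos].
    apply Rmult_le_pos; [apply pow2_ge_0|apply pow_le; lra].
  - pose proof (is_lim_seq_mult' _ _ _ _ (is_lim_seq_mult' _ _ _ _
      (is_lim_seq_succ_ratio n) (is_lim_seq_succ_ratio n)) (is_lim_seq_const s)) as Hlim.
    rewrite !Rmult_1_l in Hlim; exact Hlim.
Qed.

Lemma Cmod_cpow z m : Cmod (cpow z m) = Cmod z ^ m.
Proof.
  induction m as [|m IH]; simpl.
  - rewrite Cmod_R, Rabs_R1; reflexivity.
  - rewrite Cmod_mult, IH; reflexivity.
Qed.

Lemma kna_lt n a k : (k < n)%nat -> kna n a k = RtoC 0.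
Proof. intro Hk; unfold kna; rewrite (proj2 (Nat.leb_gt n k) Hk); reflexivity. Qed.

Lemma Cmod_kna_add_sq n a j :
  Cmod (kna n a (n + j)) ^ 2 = fact_ratio n j ^ 2 * (Cmod a ^ 2) ^ j.
Proof.
  unfold kna; rewrite (proj2 (Nat.leb_le n (n + j))) by lia.
  replace (n + j - n)%nat with j by lia.
  rewrite Cmod_mult, Cmod_R, Cmod_cpow, Cmod_conj, Rabs_pos_eq.
  - fold (fact_ratio n j). rewrite Rpow_mult_distr, <- !pow_mult, Nat.mul_comm. reflexivity.
  - pose proof (fact_ratio_ge_1 n j). unfold fact_ratio in *. lra.
Qed.

Lemma Cmod_kna_sq_le_fact n a k : Cmod a <= 1 -> Cmod (kna n a k) ^ 2 <= INR (fact k) ^ 2.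
Proof.
  intro Ha; pose proof (Cmod_ge_0 a).
  destruct (Compare_dec.le_lt_dec n k) as [Hk|Hk].
  - replace k with (n + (k - n))%nat by lia; rewrite Cmod_kna_add_sq.
    set (j := (k - n)%nat).
    assert ((Cmod a ^ 2) ^ j <= 1) by (rewrite <- (pow1 j); apply pow_incr; nra).
    assert (0 <= (Cmod a ^ 2) ^ j) by (apply pow_le; nra).
    assert (fact_ratio n j ^ 2 <= INR (fact (n + j)) ^ 2).
    { pose proof (fact_ratio_ge_1 n j).
      apply pow_incr; split; [lra|apply fact_ratio_le_fact]. }
    pose proof (pow2_ge_0 (fact_ratio n j)). nra.
  - rewrite kna_lt, Cmod_0 by exact Hk. rewrite pow_i by lia. apply pow2_ge_0.
Qed.

Lemma ex_series_Cmod_kna_sq n a : Cmod a < 1 -> ex_series (fun k => Cmod (kna n a k) ^ 2).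
Proof.
  intro Ha; pose proof (Cmod_ge_0 a).
  apply (ex_series_incr_n _ n).
  apply (ex_series_le (V := R_CompleteNormedModule))
    with (fun j => fact_ratio n j ^ 2 * ((1 + Cmod a ^ 2) / 2) ^ j).
  - intro j. change (norm ?x) with (Rabs x).
    rewrite Rabs_pos_eq by apply pow2_ge_0. rewrite Cmod_kna_add_sq.
    apply Rmult_le_compat_l; [apply pow2_ge_0|]. apply pow_incr; nra.
  - apply ex_series_fact_ratio_sq_geom; nra.
Qed.

Lemma Series_Cmod_kna_sq_ge n a : Cmod a < 1 ->
  / (1 - Cmod a ^ 2) <= Series (fun k => Cmod (kna n a k) ^ 2).
Proof.
  intro Ha; pose proof (Cmod_ge_0 a).
  rewrite (Series_incr_n_aux _ n) by (intros k Hk; rewrite kna_lt, Cmod_0 by exact Hk; ring).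
  rewrite <- Series_geom by (rewrite Rabs_pos_eq; nra).
  apply Series_le;
    [|apply (ex_series_incr_n (fun k => Cmod (kna n a k) ^ 2) n), ex_series_Cmod_kna_sq, Ha].
  intro j; rewrite Cmod_kna_add_sq.
  pose proof (fact_ratio_ge_1 n j). assert (0 <= (Cmod a ^ 2) ^ j) by (apply pow_le; nra).
  assert (1 <= fact_ratio n j ^ 2) by nra.
  split; [assumption|]. rewrite <- (Rmult_1_l ((Cmod a ^ 2) ^ j)) at 1.
  apply Rmult_le_compat_r; assumption.
Qed.

Lemma H2norm_eq c : H2norm c = sqrt (Series (fun k => Cmod (c k) ^ 2)).
Proof.
  unfold H2norm, H2inner, Re at 1; cbn [fst]. f_equal.
  apply Series_ext; intro k. rewrite <- Cmod2_conj. reflexivity.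
Qed.

Lemma Cmod_normalized_sq c k : 0 < Series (fun k => Cmod (c k) ^ 2) ->
  Cmod (Cmult (RtoC (/ H2norm c)) (c k)) ^ 2 =
  Cmod (c k) ^ 2 / Series (fun k => Cmod (c k) ^ 2).
Proof.
  intro HS.
  rewrite Cmod_mult, Cmod_R, Rpow_mult_distr, pow2_abs, pow_inv, H2norm_eq, pow2_sqrt by lra.
  apply Rmult_comm.
Qed.

Section Normalized_kernel.

Variables (n : nat) (a : C).
Hypothesis Ha : Cmod a < 1.

Let norm_kna_sq := Series (fun k => Cmod (kna n a k) ^ 2).

Lemma norm_kna_sq_pos : 0 < norm_kna_sq.
Proof.
  eapply Rlt_le_trans; [|apply Series_Cmod_kna_sq_ge, Ha].
  apply Rinv_0_lt_compat. pose proof (Cmod_ge_0 a). nra.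
Qed.

Lemma Cmod_ena_sq k : Cmod (ena n a k) ^ 2 = Cmod (kna n a k) ^ 2 / norm_kna_sq.
Proof. apply Cmod_normalized_sq, norm_kna_sq_pos. Qed.

Lemma H2_ena : H2 (ena n a).
Proof.
  apply ex_series_ext with (fun k => Cmod (kna n a k) ^ 2 * / norm_kna_sq).
  - intro k; rewrite Cmod_ena_sq; reflexivity.
  - apply ex_series_scal_r, ex_series_Cmod_kna_sq, Ha.
Qed.

Lemma Series_Cmod_ena_sq : Series (fun k => Cmod (ena n a k) ^ 2) = 1.
Proof.
  rewrite (Series_ext _ (fun k => Cmod (kna n a k) ^ 2 * / norm_kna_sq)) by apply Cmod_ena_sq.
  rewrite Series_scal_r. pose proof norm_kna_sq_pos. fold norm_kna_sq. field; lra.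
Qed.

Lemma Cmod_ena_sq_le k : Cmod (ena n a k) ^ 2 <= INR (fact k) ^ 2 * (1 - Cmod a ^ 2).
Proof.
  rewrite Cmod_ena_sq.
  assert (Hq : 0 < 1 - Cmod a ^ 2) by (pose proof (Cmod_ge_0 a); nra).
  assert (/ norm_kna_sq <= 1 - Cmod a ^ 2).
  { rewrite <- (Rinv_inv (1 - Cmod a ^ 2)).
    apply Rinv_le_contravar; [apply Rinv_0_lt_compat, Hq|apply Series_Cmod_kna_sq_ge, Ha]. }
  assert (0 < / norm_kna_sq) by apply Rinv_0_lt_compat, norm_kna_sq_pos.
  apply Rmult_le_compat; [apply pow2_ge_0|lra|apply Cmod_kna_sq_le_fact; lra|assumption].
Qed.

Lemma sum_n_Cmod_ena_sq_le K :
  sum_n (fun k => Cmod (ena n a k) ^ 2) K <= INR (S K) * INR (fact K) ^ 2 * (1 - Cmod a ^ 2).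
Proof.
  assert (Hq : 0 <= 1 - Cmod a ^ 2) by (pose proof (Cmod_ge_0 a); nra).
  induction K as [|K IH]; [rewrite sum_O; simpl; rewrite Rmult_1_l; apply Cmod_ena_sq_le|].
  rewrite sum_n_succ.
  assert (INR (S K) * INR (fact K) ^ 2 * (1 - Cmod a ^ 2) <=
          INR (S K) * INR (fact (S K)) ^ 2 * (1 - Cmod a ^ 2)).
  { apply Rmult_le_compat_r, Rmult_le_compat_l; [assumption|apply pos_INR|].
    apply pow_incr; split; [apply pos_INR|apply le_INR, fact_le; lia]. }
  pose proof (Cmod_ena_sq_le (S K)).
  rewrite S_INR with (n := S K). lra.
Qed.

End Normalized_kernel.

Lemma sum_n_Cmod_ena_sq_lt n a K : (K < n)%nat -> sum_n (fun k => Cmod (ena n a k) ^ 2) K = 0.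
Proof.
  assert (Hlt : forall k, (k < n)%nat -> Cmod (ena n a k) ^ 2 = 0).
  { intros k Hk; unfold ena; rewrite kna_lt, Cmod_mult, Cmod_0 by exact Hk; ring. }
  induction K as [|K IH]; intro HK; [rewrite sum_O; apply Hlt, HK|].
  rewrite sum_n_succ, IH, Hlt by lia. apply Rplus_0_r.
Qed.

Lemma sum_n_Cmod_ena_sq_small K eta : 0 < eta ->
  exists r, r < 1 /\ forall n a, Cmod a < 1 -> (r < Cmod a \/ (K < n)%nat) ->
    sum_n (fun k => Cmod (ena n a k) ^ 2) K <= eta.
Proof.
  intro Heta.
  set (C := INR (S K) * INR (fact K) ^ 2).
  assert (HC : 0 < C) by (apply Rmult_lt_0_compat; [apply lt_0_INR; lia|apply pow_lt, INR_fact_lt_0]).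
  exists (1 - eta / (2 * C)); split.
  { enough (0 < eta / (2 * C)) by lra. apply Rdiv_lt_0_compat; lra. }
  intros n a Ha [Hr|Hn]; [|rewrite sum_n_Cmod_ena_sq_lt by exact Hn; lra].
  eapply Rle_trans; [apply sum_n_Cmod_ena_sq_le, Ha|]; fold C.
  (* [1 - |a|^2 <= 2 (1 - |a|) < eta / C] *)
  assert (1 - Cmod a ^ 2 <= eta / C).
  { pose proof (Cmod_ge_0 a). assert (eta / C = 2 * (eta / (2 * C))) by (field; lra). nra. }
  apply Rle_trans with (C * (eta / C)); [apply Rmult_le_compat_l; lra|right; field; lra].
Qed.

Theorem theorem5 :
  forall f : nat -> C, H2 f ->
  forall eps : R, 0 < eps ->
  exists r : R, r < 1 /\ exists N : nat,
    forall (n : nat) (a : C), Cmod a < 1 ->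
      (r < Cmod a \/ (N < n)%nat) ->
      Cmod (H2inner f (ena n a)) < eps.
Proof.
  intros f Hf eps Heps.
  set (delta := eps / 4).
  assert (Hdelta : 0 < delta) by (unfold delta; lra).
  destruct (Series_tail_lt _ Hf (delta ^ 2) (pow_lt _ 2 Hdelta)) as [K Htail].
  set (eta := delta ^ 2 / (Series (fun k => Cmod (f k) ^ 2) + 1)).
  assert (Heta : 0 < eta).
  { apply Rdiv_lt_0_compat; [apply pow_lt, Hdelta|].
    enough (0 <= Series (fun k => Cmod (f k) ^ 2)) by lra.
    apply Series_nonneg; [intro; apply pow2_ge_0|exact Hf]. }
  destruct (sum_n_Cmod_ena_sq_small K eta Heta) as [r [Hr Hhead]].
  exists r; split; [exact Hr|]; exists K; intros n a Ha Hna.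
  eapply Rle_lt_trans; [apply Cmod_H2inner_le; [exact Hf|apply H2_ena, Ha]|].
  pose proof (Series_mul_lt (fun k => Cmod (f k)) (fun k => Cmod (ena n a k)) K delta Hdelta
    Hf (H2_ena n a Ha) (Req_le _ _ (Series_Cmod_ena_sq n a Ha)) Htail (Hhead n a Ha Hna)).
  unfold delta in *; lra.
Qed.
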